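(* Let $\sigma, \tau \in \mathrm{Perm}(S)$. Set $S' = S \setminus \mathrm{supp}(\tau)$. Let $\pi' \in \mathrm{Perm}(S')$, and let $\pi$ be the permutation with $\pi|_{\mathrm{supp}(\tau)} = \tau$ and $\pi|_{S'} = \pi'$. Let $\mathbf{Z} \in M_N(\mathbb{C})^S$. If $S' = \varnothing$, then $\prod_{\gamma \in \mathrm{Cyc}(\pi \sigma)} \mathrm{tr}_N(\prod_{k \in \gamma} Z_k) = \prod_{\gamma \in \mathrm{Cyc}(\tau \sigma)} \mathrm{tr}_N(\prod_{k \in \gamma} Z_k) = \lambda_{\sigma,\tau}$. Otherwise, we have \[ \prod_{\gamma \in \mathrm{Cyc}(\pi \sigma)} \mathrm{tr}_N \left( \prod_{k \in \gamma} Z_k \right) = \prod_{\gamma \in \mathrm{Cyc}(\pi'(\sigma \ominus \tau))} \mathrm{tr}_N \left( \prod_{k \in \gamma} Z_k^{\tau,\sigma} \right). \]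
   Context: $S \subseteq \mathbb{N}$ is a finite set, $\mathrm{Perm}(S)$ the permutations of $S$, $\mathrm{supp}(\sigma)=\{k: \sigma(k)\neq k\}$, and $\mathrm{Cyc}(\sigma)$ the set of cycles of $\sigma$ (nontrivial cycles together with fixed points, each fixed point viewed as a trivial cycle). $M_N(\mathbb{C})$ is the algebra of $N\times N$ complex matrices and $\mathrm{tr}_N = \frac1N \mathrm{Tr}$. For a cycle $\gamma$ written as $(k_1 \dots k_m)$ with $k_1 = \min \mathrm{supp}(\gamma)$, $\prod_{k \in \gamma} x_k := x_{k_1}\cdots x_{k_m}$; for a fixed point $j$, $\prod_{k\in\gamma} x_k := x_j$. For $\sigma,\tau \in \mathrm{Perm}(S)$, $\sigma \ominus \tau \in \mathrm{Perm}(S \setminus \mathrm{supp}(\tau))$ is defined by $(\sigma\ominus\tau)(k) = (\tau\sigma)^{r(k)}(k)$, where $r(k)\ge 1$ is the smallest index with $(\tau\sigma)^{r(k)}(k) \notin \mathrm{supp}(\tau)$. The $(\sigma,\tau)$-reduction $\mathbf{Z}^{\sigma,\tau} \in M_N(\mathbb{C})^{S\setminus \mathrm{supp}(\tau)}$ of $\mathbf{Z} = (Z_k)_{k\in S}$ (written $Z_k^{\tau,\sigma}$ in the claim): for $j \in S \setminus \mathrm{supp}(\tau)$, with $r(j)\ge1$ the first index such that $(\tau\sigma)^{r(j)}(j)\notin \mathrm{supp}(\tau)$, set $Z_j^{\sigma,\tau} = Z_j Z_{(\tau\sigma)(j)} \cdots Z_{(\tau\sigma)^{r(j)-1}(j)}$.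 Let the scalar $\lambda_{\sigma,\tau} = \prod_{\gamma \in \mathrm{Cyc}(\tau\sigma),\ \mathrm{supp}(\gamma)\subseteq \mathrm{supp}(\tau)} \mathrm{tr}_N(\prod_{k\in\gamma} Z_k)$ (the product over cycles of $\tau\sigma$, possibly fixed points, contained in $\mathrm{supp}(\tau)$); then the value of $Z^{\sigma,\tau}_m$ for $m = \min(S\setminus\mathrm{supp}(\tau))$ is additionally multiplied by $\lambda_{\sigma,\tau}$. If $\mathrm{supp}(\tau) = S$, all cycles of $\tau\sigma$ contribute to $\lambda_{\sigma,\tau}$. *)

From mathcomp Require Import all_boot all_algebra all_fingroup complex.
From mathcomp Require Import reals.
Set Implicit Arguments. Unset Strict Implicit. Unset Printing Implicit Defensive.
Import GRing.Theory Num.Theory.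
Local Open Scope ring_scope.

(* The finite set S of natural numbers is modelled as S : {set 'I_n}
   (any finite S ⊆ ℕ sits in some 'I_n, with the same order).
   Perm(S) = permutations of 'I_n that are perm_on S. *)

(* composition in the usual (right-to-left) sense: (pcmp t s) k = t (s k) *)
Definition pcmp n (t s : {perm 'I_n}) : {perm 'I_n} := (s * t)%g.

Definition supp n (t : 'I_n -> 'I_n) : {set 'I_n} := [set k | t k != k].

Definition trN (C : fieldType) N (A : 'M[C]_N) : C := (N%:R)^-1 * \tr A.

Definition mxword (C : fieldType) N n (Z : 'I_n -> 'M[C]_N) (s : seq 'I_n)
  : 'M[C]_N := foldr (fun k M => Z k *m M) 1%:M s.

Definition cycword n (f : 'I_n -> 'I_n) (x : 'I_n) : seq 'I_n :=
  traject f x (fingraph.order f x).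

Definition cycmin n (f : 'I_n -> 'I_n) (x : 'I_n) : bool :=
  [forall y, fconnect f x y ==> (x <= y)%N].

(* \prod_{gamma in Cyc(f)} tr_N (\prod_{k in gamma} Z_k), f a permutation of D;
   each cycle (fixed points included) is represented by its minimum. *)
Definition cycprod (C : fieldType) N n (f : 'I_n -> 'I_n) (D : {set 'I_n})
  (Z : 'I_n -> 'M[C]_N) : C :=
  \prod_(x in D | cycmin f x) trN (mxword Z (cycword f x)).

(* r(k) >= 1: first index with (tau sigma)^{r(k)}(k) \notin supp tau *)
Definition rind n (sigma tau : {perm 'I_n}) (k : 'I_n) : nat :=
  (find (fun y => y \notin supp tau)
        [seq iter i.+1 (pcmp tau sigma) k | i <- iota 0 n]).+1.

(* sigma \ominus tau, as a function (relevant on S \ supp tau) *)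
Definition pminus n (sigma tau : {perm 'I_n}) (k : 'I_n) : 'I_n :=
  iter (rind sigma tau k) (pcmp tau sigma) k.

Definition lambda (C : fieldType) N n (sigma tau : {perm 'I_n}) (S : {set 'I_n})
  (Z : 'I_n -> 'M[C]_N) : C :=
  \prod_(x in S | cycmin (pcmp tau sigma) x &&
          [forall y, fconnect (pcmp tau sigma) x y ==> (y \in supp tau)])
     trN (mxword Z (cycword (pcmp tau sigma) x)).

Definition Zred (C : fieldType) N n (sigma tau : {perm 'I_n}) (S : {set 'I_n})
  (Z : 'I_n -> 'M[C]_N) (j : 'I_n) : 'M[C]_N :=
  let w := mxword Z [seq iter i (pcmp tau sigma) j | i <- iota 0 (rind sigma tau j)] in
  if [forall k in S :\: supp tau, (j <= k)%N] then lambda sigma tau S Z *: w else w.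

From mathcomp Require Import all_boot all_algebra all_fingroup complex.
From mathcomp Require Import reals.
From mathcomp Require Import zify.
Set Implicit Arguments. Unset Strict Implicit. Unset Printing Implicit Defensive.
Import GRing.Theory Num.Theory.

(* Write g = tau sigma and h = pi sigma; they agree at z whenever sigma z lies
   in supp tau.  Hence the cycles of h inside supp tau are the cycles of g
   inside supp tau, and they contribute lambda.  Every other cycle of h meets
   S' = S \ supp tau, and pi' (sigma ⊖ tau) is the first-return map of h to
   S': from y in S', h follows g through supp tau for r(y) steps, and then pi
   = pi' applies to (sigma ⊖ tau)(y).  So the word of such a cycle is the
   concatenation of the reduced words Z^{sigma,tau}_y along the corresponding
   cycle of pi' (sigma ⊖ tau), and lambda is recovered exactly once, on the
   cycle through min S'. *)

Definition orbit_within (T : finType) (f : T -> T) (A : {set T}) (x : T) : bool :=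
  [forall y, fconnect f x y ==> (y \in A)].

Section Orbits.
Variables (T : finType) (f : T -> T).

Lemma traject_iota x k : traject f x k = [seq iter i f x | i <- iota 0 k].
Proof.
elim: k x => [|k IH] x //=; rewrite IH -[1%N]/(1 + 0)%N iotaDl -map_comp.
by congr (_ :: _); apply: eq_map => i /=; rewrite -iterSr.
Qed.

Lemma iter_in (D : {set T}) i : {homo f : z / z \in D} -> {homo iter i f : z / z \in D}.
Proof. by move=> fD; elim: i => [|i IH] z //= /IH /fD. Qed.

Lemma fconnect_in (D : {set T}) x y :
  {homo f : z / z \in D} -> fconnect f x y -> x \in D -> y \in D.
Proof. by move=> fD /iter_findex <-; apply: iter_in. Qed.

Lemma order_traject x k :
  0 < k -> iter k f x = x -> uniq (traject f x k) -> fingraph.order f x = k.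
Proof.
case: k => // k _ fk_x uniq_x.
have cyc_x : fcycle f (traject f x k.+1).
  have rcons_x : rcons (traject f (f x) k) x = traject f (f x) k.+1.
    by rewrite [in RHS]trajectSr -iterSr fk_x.
  by rewrite trajectS /= rcons_x fpath_traject.
by rewrite (fingraph.order_cycle cyc_x uniq_x) ?size_traject // mem_head.
Qed.

End Orbits.

Section AgreeOnOrbit.
Variables (T : finType) (f f' : T -> T) (x : T).
Hypothesis f'_f : forall z, fconnect f x z -> f' z = f z.

Lemma eq_iter_orbit i : iter i f' x = iter i f x.
Proof. by elim: i => [|i IH] //=; rewrite IH f'_f // fconnect_iter. Qed.

Lemma eq_fconnect_orbit : fconnect f' x =1 fconnect f x.
Proof.
move=> y; apply/idP/idP => /iter_findex <-.
  by rewrite eq_iter_orbit fconnect_iter.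
by rewrite -eq_iter_orbit fconnect_iter.
Qed.

Lemma eq_orbit_orbit : fingraph.orbit f' x = fingraph.orbit f x.
Proof.
have eq_order : fingraph.order f' x = fingraph.order f x by apply: eq_card eq_fconnect_orbit.
by rewrite /fingraph.orbit eq_order !traject_iota; apply: eq_map => i; rewrite eq_iter_orbit.
Qed.

Lemma eq_orbit_within A : orbit_within f' A x = orbit_within f A x.
Proof. by apply: eq_forallb => y; rewrite eq_fconnect_orbit. Qed.

End AgreeOnOrbit.

Lemma ltn_bracket (u : nat -> nat) i :
  u 0 = 0 -> (forall j, u j < u j.+1) -> exists j, u j <= i < u j.+1.
Proof.
move=> u0 u_incr; elim: i => [|i [j /andP [le_ji lt_ij]]].
  by exists 0; move: (u_incr 0); rewrite u0.
have [lt_Si | ] := ltnP i.+1 (u j.+1); first by exists j; rewrite lt_Si ltnW.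
rewrite leq_eqVlt ltnNge lt_ij orbF => /eqP <-.
by exists j.+1; rewrite leqnn u_incr.
Qed.

Section FirstReturn.
Variables (T : finType) (h f : T -> T) (r : T -> nat) (A : {set T}).
Hypothesis h_inj : injective h.
Hypothesis r_gt0 : forall y, y \in A -> 0 < r y.
Hypothesis iter_r : forall y, y \in A -> iter (r y) h y = f y.
Hypothesis f_in : {homo f : y / y \in A}.
Hypothesis iter_notin : forall y i, y \in A -> 0 < i < r y -> iter i h y \notin A.

Variable x : T.
Hypothesis x_in : x \in A.

(* [s j] is the time of the [j]-th return of the [h]-orbit of [x] to [A]. *)
Let s j := sumn [seq r y | y <- traject f x j].

Let sS j : s j.+1 = s j + r (iter j f x).
Proof. by rewrite /s trajectSr map_rcons sumn_rcons. Qed.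

Let iter_f_in j : iter j f x \in A.
Proof. exact: iter_in. Qed.

Let s_incr : {homo s : i j / i < j}.
Proof. by apply: homo_ltn ltn_trans _ => j; rewrite sS -addn1 leq_add2l r_gt0. Qed.

Lemma iter_return j : iter (s j) h x = iter j f x.
Proof. by elim: j => [|j IH] //; rewrite sS addnC iterD IH iter_r. Qed.

Lemma iter_in_return i : iter i h x \in A -> exists j, s j = i.
Proof.
move=> iA; have [j /andP [le_ji]] := ltn_bracket i (erefl (s 0)) (fun j => s_incr (ltnSn j)).
rewrite sS => lt_ij; exists j; apply/eqP; rewrite eqn_leq le_ji /= leqNgt.
apply/negP => lt_ji; have i_mid : 0 < i - s j < r (iter j f x) by lia.
move: (iter_notin (iter_f_in j) i_mid).
by rewrite -iter_return -iterD subnK ?(ltnW lt_ji) // iA.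
Qed.

Lemma traject_return j :
  traject h x (s j) = flatten [seq traject h y (r y) | y <- traject f x j].
Proof.
elim: j => [|j IH] //.
by rewrite sS trajectD IH trajectSr map_rcons flatten_rcons iter_return.
Qed.

Lemma fconnect_return y : y \in A -> fconnect f x y = fconnect h x y.
Proof.
move=> yA; apply/idP/idP => /iter_findex y_eq.
  by rewrite -y_eq -iter_return fconnect_iter.
by move: yA; rewrite -y_eq => /iter_in_return [j <-]; rewrite iter_return fconnect_iter.
Qed.

Lemma orbit_return :
  fingraph.orbit h x = flatten [seq traject h y (r y) | y <- fingraph.orbit f x].
Proof.
have [j0 s_j0] : exists j, s j = fingraph.order h x by apply: iter_in_return; rewrite iter_order.
have j0_gt0 : 0 < j0.
  by case: j0 s_j0 => // s0; have := fingraph.order_gt0 h x; rewrite -s0.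
have uniq_j0 : uniq (traject f x j0).
  rewrite traject_iota map_inj_in_uniq ?iota_uniq // => i1 i2.
  rewrite !mem_iota !add0n /= => lt1 lt2 /(congr1 (findex h x)).
  rewrite -!iter_return !findex_iter -?s_j0 ?s_incr //.
  by apply: incn_inj; apply: leq_mono.
rewrite /fingraph.orbit -s_j0 traject_return (order_traject (f := f) j0_gt0 _ uniq_j0) //.
by rewrite -iter_return s_j0 iter_order.
Qed.

End FirstReturn.

Section Cycles.
Variables (n : nat) (p : 'I_n -> 'I_n).

Lemma mem_cycword x y : (y \in cycword p x) = fconnect p x y.
Proof. by rewrite fconnect_orbit. Qed.

Lemma eq_cycword_orbit p' x :
  (forall z, fconnect p x z -> p' z = p z) -> cycword p' x = cycword p x.
Proof. exact: eq_orbit_orbit. Qed.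

Lemma eq_cycmin_orbit p' x :
  (forall z, fconnect p x z -> p' z = p z) -> cycmin p' x = cycmin p x.
Proof. by move=> p'_p; apply: eq_forallb => y; rewrite (eq_fconnect_orbit p'_p). Qed.

Definition cmin x : 'I_n := [arg min_(z < x | fconnect p x z) val z].

Lemma fconnect_cmin x : fconnect p x (cmin x).
Proof. by rewrite /cmin; case: arg_minnP => //; apply: connect0. Qed.

Lemma cycmin_cmin x : cycmin p (cmin x).
Proof.
rewrite /cmin; case: arg_minnP => [|z xz z_min]; first exact: connect0.
by apply/forallP => y; apply/implyP => zy; apply/z_min/(connect_trans xz).
Qed.

Lemma cycmin_inj x y :
  fconnect p x y -> fconnect p y x -> cycmin p x -> cycmin p y -> x = y.
Proof.
move=> xy yx /forallP /(_ y) /implyP /(_ xy) le_xy.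
move=> /forallP /(_ x) /implyP /(_ yx) le_yx.
by apply: val_inj; apply/eqP; rewrite eqn_leq le_xy le_yx.
Qed.

Hypothesis p_inj : injective p.

Lemma cmin_eq x y : fconnect p x y -> cycmin p y -> cmin x = y.
Proof.
move=> xy y_min; have cx : fconnect p (cmin x) x by rewrite fconnect_sym ?fconnect_cmin.
apply: cycmin_inj (cycmin_cmin x) y_min; first exact: connect_trans cx xy.
by rewrite fconnect_sym // (connect_trans cx xy).
Qed.

End Cycles.

Lemma prod_cycmin_mem (C : comPzRingType) n (p : 'I_n -> 'I_n) (D : {set 'I_n}) m (c : C) :
  {homo p : z / z \in D} -> {in D &, forall x y, fconnect p x y = fconnect p y x} ->
  m \in D ->
  (\prod_(x in D | cycmin p x) (if m \in cycword p x then c else 1) = c)%R.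
Proof.
move=> pD p_sym mD; have m0D : cmin p m \in D := fconnect_in pD (fconnect_cmin p m) mD.
rewrite (bigD1 (cmin p m)) /=; last by rewrite m0D cycmin_cmin.
rewrite mem_cycword p_sym // fconnect_cmin big1 ?GRing.mulr1 // => x.
move=> /andP [/andP [xD x_min] x_m0]; rewrite mem_cycword; case: ifP => // xm.
case/eqP: x_m0; apply: cycmin_inj x_min (cycmin_cmin p m).
  exact: connect_trans xm (fconnect_cmin p m).
by rewrite p_sym //; apply: connect_trans xm (fconnect_cmin p m).
Qed.

Section MatrixWords.
Local Open Scope ring_scope.
Variables (C : fieldType) (N n : nat).
Implicit Types (Z : 'I_n -> 'M[C]_N) (s : seq 'I_n).

Lemma mxword_cat Z s1 s2 : mxword Z (s1 ++ s2) = mxword Z s1 *m mxword Z s2.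
Proof. by elim: s1 => [|a s1 IH] /=; rewrite ?mul1mx // IH mulmxA. Qed.

Lemma eq_in_mxword Z1 Z2 s : {in s, Z1 =1 Z2} -> mxword Z1 s = mxword Z2 s.
Proof.
elim: s => [|a s IH] //= Z12; rewrite Z12 ?mem_head // IH // => y ys.
by rewrite Z12 // inE ys orbT.
Qed.

Lemma mxword_flatten Z (w : 'I_n -> seq 'I_n) s :
  mxword (fun j => mxword Z (w j)) s = mxword Z (flatten (map w s)).
Proof. by elim: s => [|a s IH] //=; rewrite mxword_cat -IH. Qed.

Lemma mxword_scale (c : 'I_n -> C) Z s :
  mxword (fun j => c j *: Z j) s = (\prod_(j <- s) c j) *: mxword Z s.
Proof.
elim: s => [|a s IH] /=; first by rewrite big_nil scale1r.
by rewrite IH big_cons -scalemxAl -scalemxAr scalerA.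
Qed.

Lemma trN_mxword_rot Z i s : trN (mxword Z (rot i s)) = trN (mxword Z s).
Proof. by rewrite /trN /rot mxword_cat mxtrace_mulC -mxword_cat cat_take_drop. Qed.

Lemma trN_cycword_fconnect Z (p : 'I_n -> 'I_n) x y :
  injective p -> fconnect p x y -> trN (mxword Z (cycword p y)) = trN (mxword Z (cycword p x)).
Proof.
move=> p_inj; rewrite fconnect_orbit => xy.
rewrite /cycword -/(fingraph.orbit p y) -/(fingraph.orbit p x).
by rewrite (fingraph.orbitE (cycle_orbit p_inj x) (orbit_uniq p x) xy) trN_mxword_rot.
Qed.

End MatrixWords.

Lemma pcmpE n (t s : {perm 'I_n}) k : pcmp t s k = t (s k).
Proof. by rewrite /pcmp permM. Qed.

Lemma supp_permE n (t : {perm 'I_n}) k : (t k \in supp t) = (k \in supp t).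
Proof. by rewrite !inE (inj_eq perm_inj). Qed.

Lemma supp_perm_on n (S : {set 'I_n}) (t : {perm 'I_n}) : perm_on S t -> {subset supp t <= S}.
Proof. by move=> /subsetP t_on k; rewrite inE => /t_on. Qed.

Section ReturnIndex.
Variables (n : nat) (sigma tau : {perm 'I_n}).
Local Notation g := (pcmp tau sigma).
Local Notation r := (rind sigma tau).

Lemma iter_rind_notin y : y \notin supp tau -> iter (r y) g y \notin supp tau.
Proof.
move=> yT; pose L := [seq iter i.+1 g y | i <- iota 0 n].
have has_L : has (fun z => z \notin supp tau) L.
  have le_order : fingraph.order g y <= n.
    by rewrite /fingraph.order -[X in _ <= X](card_ord n) max_card.
  apply/hasP; exists y => //; apply/mapP; exists (fingraph.order g y).-1.
    by rewrite mem_iota add0n /=; case: (fingraph.order g y) (fingraph.order_gt0 g y) le_order.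
  by rewrite prednK ?fingraph.order_gt0 // iter_order //; apply: perm_inj.
have lt_n : find (fun z => z \notin supp tau) L < n.
  by move: has_L; rewrite has_find size_map size_iota.
by have := nth_find y has_L; rewrite (nth_map 0) ?nth_iota ?size_iota.
Qed.

Lemma iter_lt_rind_in y i : 0 < i < r y -> iter i g y \in supp tau.
Proof.
case: i => // i; rewrite /rind => /andP [_]; rewrite ltnS => lt_ir.
have lt_in : i < n.
  apply: leq_trans lt_ir _; rewrite -[X in _ <= X](size_iota 0 n).
  by rewrite -(size_map (fun i => iter i.+1 g y)) find_size.
have := before_find y lt_ir.
by rewrite (nth_map 0) ?size_iota // nth_iota // => /negbFE.
Qed.

End ReturnIndex.

Section Reduction.
Variables (n : nat) (S : {set 'I_n}) (sigma tau pi : {perm 'I_n}).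
Hypotheses (sigma_on : perm_on S sigma) (tau_on : perm_on S tau) (pi_on : perm_on S pi).
Hypothesis pi_tau : forall k, k \in supp tau -> pi k = tau k.

Local Notation T := (supp tau).
Local Notation S' := (S :\: supp tau).
Local Notation g := (pcmp tau sigma).
Local Notation h := (pcmp pi sigma).

Lemma pi_compl k : k \in S' -> pi k \in S'.
Proof.
rewrite !in_setD => /andP [kT kS]; rewrite (perm_closed _ pi_on) kS andbT.
apply: contra kT => pikT; pose j := (tau^-1)%g (pi k).
have tau_j : tau j = pi k by rewrite /j permKV.
have jT : j \in T by rewrite -supp_permE tau_j.
suff -> : k = j by [].
by apply: (@perm_inj _ pi); rewrite (pi_tau jT) tau_j.
Qed.

Let g_closed : {homo g : z / z \in S}.
Proof. by move=> z; rewrite (perm_closed _ (perm_onM sigma_on tau_on)). Qed.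

Let h_closed : {homo h : z / z \in S}.
Proof. by move=> z; rewrite (perm_closed _ (perm_onM sigma_on pi_on)). Qed.

Lemma pcmp_supp z : (g z \in T) = (sigma z \in T).
Proof. by rewrite pcmpE supp_permE. Qed.

Lemma h_eq_g z : sigma z \in T -> h z = g z.
Proof. by move=> szT; rewrite !pcmpE pi_tau. Qed.

Lemma g_compl z : sigma z \notin T -> g z = sigma z.
Proof. by rewrite pcmpE inE negbK => /eqP. Qed.

Lemma h_compl z : z \in S -> sigma z \notin T -> h z \in S'.
Proof. by move=> zS szT; rewrite pcmpE pi_compl // in_setD szT (perm_closed _ sigma_on). Qed.

Lemma g_eq_h_within x : orbit_within h T x -> forall z, fconnect h x z -> g z = h z.
Proof.
move=> /forallP x_in z xz; have zT : z \in T by apply: (implyP (x_in z)).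
have hzT : h z \in T by apply: (implyP (x_in (h z))); apply: connect_trans xz (fconnect1 h z).
case szT: (sigma z \in T); first by rewrite h_eq_g.
by have := h_compl (supp_perm_on tau_on zT) (negbT szT); rewrite in_setD hzT.
Qed.

Lemma h_eq_g_within x : orbit_within g T x -> forall z, fconnect g x z -> h z = g z.
Proof.
move=> /forallP x_in z xz; apply: h_eq_g; rewrite -pcmp_supp.
by apply: (implyP (x_in (g z))); apply: connect_trans xz (fconnect1 g z).
Qed.

Lemma orbit_within_pcmp x : orbit_within h T x = orbit_within g T x.
Proof.
apply/idP/idP => x_in; first by rewrite (eq_orbit_within (g_eq_h_within x_in)).
by rewrite (eq_orbit_within (h_eq_g_within x_in)).
Qed.

Lemma prod_cycles_within (C : fieldType) N (Z : 'I_n -> 'M[C]_N) :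
  (\prod_(x in S | cycmin h x && orbit_within h T x) trN (mxword Z (cycword h x)))%R =
  lambda sigma tau S Z.
Proof.
rewrite /lambda; apply: eq_big => [x | x /andP [_ /andP [_ x_in]]].
  rewrite -[X in _ = _ && (_ && X)]/(orbit_within g T x) -orbit_within_pcmp.
  case: (boolP (orbit_within h T x)) => x_in; rewrite ?andbF //.
  by rewrite (eq_cycmin_orbit (g_eq_h_within x_in)).
by rewrite (eq_cycword_orbit (g_eq_h_within x_in)).
Qed.

Lemma cycprod_supp_full (C : fieldType) N (Z : 'I_n -> 'M[C]_N) :
  S' = set0 -> cycprod h S Z = lambda sigma tau S Z.
Proof.
move=> S'0; rewrite /cycprod -prod_cycles_within; apply: eq_bigl => x.
case: (boolP (x \in S)) => //= xS; case: (cycmin h x) => //=; symmetry.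
apply/forallP => y; apply/implyP => xy.
have yS : y \in S := fconnect_in h_closed xy xS.
by apply: contraT => yT; have := in_set0 y; rewrite -S'0 in_setD yT yS.
Qed.

Section Complement.
Variable pi' : {perm 'I_n}.
Hypothesis pi_pi' : forall k, k \in S' -> pi k = pi' k.

Local Notation f := (fun k => pi' (pminus sigma tau k)).
Local Notation r := (rind sigma tau).

Lemma iter_h_lt_rind y i : i < r y -> iter i h y = iter i g y.
Proof.
elim: i => [|i IH] // lt_ir; rewrite !iterS IH ?(ltnW lt_ir) // h_eq_g //.
by rewrite -pcmp_supp -iterS iter_lt_rind_in // lt_ir.
Qed.

Lemma traject_h_rind y : traject h y (r y) = [seq iter i g y | i <- iota 0 (r y)].
Proof.
rewrite traject_iota; apply/eq_in_map => i; rewrite mem_iota => /andP [_ lt_ir].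
exact: iter_h_lt_rind.
Qed.

Lemma pminus_compl y : y \in S' -> pminus sigma tau y \in S'.
Proof.
rewrite !in_setD => /andP [yT yS].
by rewrite /pminus (iter_rind_notin sigma yT) (iter_in _ g_closed).
Qed.

Lemma iter_h_rind y : y \in S' -> iter (r y) h y = pi' (pminus sigma tau y).
Proof.
move=> yS'; have [j r_j] : exists j, r y = j.+1 by eexists.
have yT : y \notin T by move: yS'; rewrite in_setD => /andP [].
have := iter_rind_notin sigma yT; rewrite -pi_pi' ?pminus_compl // /pminus r_j !iterS.
by rewrite iter_h_lt_rind ?r_j // pcmp_supp => /g_compl ->; rewrite pcmpE.
Qed.

Lemma f_compl : {homo f : y / y \in S'}.
Proof. by move=> y yS'; rewrite -pi_pi' ?pi_compl ?pminus_compl. Qed.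

Lemma iter_lt_rind_notin y i : 0 < i < r y -> iter i h y \notin S'.
Proof.
move=> lt_ir; rewrite iter_h_lt_rind ?(andP lt_ir).2 //.
by rewrite in_setD iter_lt_rind_in.
Qed.

Lemma orbit_h_compl x : x \in S' ->
  fingraph.orbit h x = flatten [seq traject h y (r y) | y <- fingraph.orbit f x].
Proof.
move=> xS'; apply: (orbit_return (A := S') (r := r) _ _ iter_h_rind f_compl _ xS') => //.
  exact: perm_inj.
by move=> y i _; apply: iter_lt_rind_notin.
Qed.

Lemma fconnect_f_h x y : x \in S' -> y \in S' -> fconnect f x y = fconnect h x y.
Proof.
move=> xS'; apply: (fconnect_return (r := r) _ iter_h_rind f_compl _ xS') => //.
by move=> z i _; apply: iter_lt_rind_notin.
Qed.

Lemma fconnect_f_sym : {in S' &, forall x y, fconnect f x y = fconnect f y x}.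
Proof. by move=> x y xS' yS'; rewrite !fconnect_f_h // (fconnect_sym perm_inj). Qed.

Section Traces.
Local Open Scope ring_scope.
Variables (C : fieldType) (N : nat) (Z : 'I_n -> 'M[C]_N).
Local Notation V p x := (trN (mxword Z (cycword p x))).
Local Notation lam := (lambda sigma tau S Z).

Lemma cmin_h_inj : {in [set x in S' | cycmin f x] &, injective (cmin h)}.
Proof.
move=> x1 x2 /setIdP [x1S' x1_min] /setIdP [x2S' x2_min] eq_c.
have x12 : fconnect h x1 x2.
  apply: connect_trans (fconnect_cmin h x1) _.
  by rewrite eq_c (fconnect_sym perm_inj) fconnect_cmin.
apply: cycmin_inj x1_min x2_min; first by rewrite fconnect_f_h.
by rewrite fconnect_f_sym // fconnect_f_h.
Qed.

Lemma cmin_h_image :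
  cmin h @: [set x in S' | cycmin f x] =
  [set x in S | cycmin h x && ~~ orbit_within h T x].
Proof.
apply/setP => y; rewrite inE; apply/imsetP/idP.
  move=> [x /setIdP [/setDP [xS xT] _] ->].
  rewrite (fconnect_in h_closed (fconnect_cmin h x) xS) cycmin_cmin /=.
  by apply/forallPn; exists x; rewrite negb_imply (fconnect_sym perm_inj) fconnect_cmin.
move=> /andP [yS /andP [y_min /forallPn [z]]]; rewrite negb_imply => /andP [yz zT].
have zS' : z \in S' by rewrite in_setD zT (fconnect_in h_closed yz yS).
have z0S' : cmin f z \in S' := fconnect_in f_compl (fconnect_cmin f z) zS'.
have z0z : fconnect h (cmin f z) z.
  by rewrite -fconnect_f_h // fconnect_f_sym // fconnect_cmin.
have zy : fconnect h z y by rewrite (fconnect_sym perm_inj).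
exists (cmin f z); first by rewrite inE z0S' cycmin_cmin.
exact/esym/(cmin_eq perm_inj (connect_trans z0z zy) y_min).
Qed.

Lemma prod_cycles_meeting_compl :
  \prod_(x in S' | cycmin f x) V h x =
  \prod_(x in S | cycmin h x && ~~ orbit_within h T x) V h x.
Proof.
transitivity (\prod_(x in [set x in S' | cycmin f x]) V h (cmin h x)).
  apply: eq_big => x; first by rewrite inE.
  by rewrite (trN_cycword_fconnect _ perm_inj (fconnect_cmin h x)).
transitivity (\prod_(x in cmin h @: [set x in S' | cycmin f x]) V h x).
  by rewrite big_imset //; apply: cmin_h_inj.
by apply: eq_bigl => x; rewrite cmin_h_image inE.
Qed.

Variable m : 'I_n.
Hypotheses (m_in : m \in S') (m_min : forall k, k \in S' -> (m <= k)%N).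

Lemma Zred_compl j : j \in S' ->
  Zred sigma tau S Z j = (if j == m then lam else 1) *: mxword Z (traject h j (r j)).
Proof.
move=> jS'; rewrite /Zred traject_h_rind.
have -> : [forall k in S', (j <= k)%N] = (j == m).
  apply/forallP/eqP => [j_min | ->]; last by move=> k; apply/implyP/m_min.
  by apply/val_inj/eqP; rewrite eqn_leq m_min // (implyP (j_min m)).
by case: eqP; rewrite ?scale1r.
Qed.

Lemma trN_Zred_cycword x : x \in S' ->
  trN (mxword (Zred sigma tau S Z) (cycword f x)) =
  (if m \in cycword f x then lam else 1) * V h x.
Proof.
move=> xS'; have in_S' j : j \in cycword f x -> j \in S'.
  by rewrite mem_cycword => /fconnect_in; apply; [apply: f_compl | apply: xS'].
pose c j := if j == m then lam else 1.
rewrite (eq_in_mxword (Z2 := fun j => c j *: mxword Z (traject h j (r j)))); last first.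
  by move=> j /in_S' /Zred_compl.
rewrite mxword_scale mxword_flatten /cycword -/(fingraph.orbit f x) -orbit_h_compl //.
rewrite /trN mxtraceZ mulrCA /c; congr (_ * _).
case: ifP => mx; last first.
  by rewrite big1_seq // => j /andP [_ jx]; case: eqP jx => // ->; rewrite mx.
by rewrite (bigD1_seq m) ?orbit_uniq //= eqxx big1 ?mulr1 // => j /negbTE ->.
Qed.

Lemma cycprod_compl : cycprod h S Z = cycprod f S' (Zred sigma tau S Z).
Proof.
transitivity (lam * \prod_(x in S' | cycmin f x) V h x).
  rewrite /cycprod (bigID (orbit_within h T)) /= prod_cycles_meeting_compl.
  by rewrite -prod_cycles_within; congr (_ * _); apply: eq_bigl => x; rewrite andbA.
rewrite -{1}(prod_cycmin_mem lam f_compl fconnect_f_sym m_in) -big_split /=.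
by apply: eq_bigr => x /andP [xS' _]; rewrite trN_Zred_cycword.
Qed.

End Traces.

End Complement.
End Reduction.

Theorem lemma3p19 (R : realType) (N n : nat) (S : {set 'I_n})
  (sigma tau pi' pi : {perm 'I_n}) (Z : 'I_n -> 'M[R[i]]_N) :
  (0 < N)%N ->
  perm_on S sigma -> perm_on S tau ->
  perm_on (S :\: supp tau) pi' ->
  perm_on S pi ->
  (forall k, k \in supp tau -> pi k = tau k) ->
  (forall k, k \in S :\: supp tau -> pi k = pi' k) ->
  if S :\: supp tau == set0 then
    cycprod (pcmp pi sigma) S Z = cycprod (pcmp tau sigma) S Z /\
    cycprod (pcmp tau sigma) S Z = lambda sigma tau S Z
  else
    cycprod (pcmp pi sigma) S Z =
    cycprod (fun k => pi' (pminus sigma tau k)) (S :\: supp tau)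
            (Zred sigma tau S Z).
Proof.
move=> _ sigma_on tau_on _ pi_on pi_tau pi_pi'.
case: ifP => [/eqP S'0 | /set0Pn [x0 x0S']].
  rewrite (cycprod_supp_full sigma_on tau_on pi_on pi_tau Z S'0).
  by rewrite (cycprod_supp_full sigma_on tau_on tau_on (fun _ _ => erefl) Z S'0).
case: (arg_minnP val x0S') => m m_in m_min.
exact: cycprod_compl m_in m_min.
Qed.
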